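(* Let $k$ be a field with $\operatorname{char}(k)\nmid(d+1)!$, $V$ an $n$-dimensional $k$-vector space, $S=\operatorname{Sym}V$. Let $f\in S_{d+1}$ satisfy $\dim_k\langle\nabla f\rangle=n$. Then $f$ is a direct sum if and only if $\nabla f\in\operatorname{Grass}(n,S_d)$ is a direct sum if and only if $\nabla f\in\operatorname{Grass}(n,S_d)$ is a balanced direct sum.
   Context: For $f\in S_{d+1}$ and a basis $x_1,\dots,x_n$ of $V$, $\langle\nabla f\rangle$ is the $k$-span of $\partial f/\partial x_1,\dots,\partial f/\partial x_n$ in $S_d$, and when this has dimension $n$, $\nabla f$ is the corresponding point of $\operatorname{Grass}(n,S_d)$. A form $f$ is a direct sum if there is a decomposition $V=U\oplus W$ and nonzero $f_1\in\operatorname{Sym}^{d+1}U$, $f_2\in\operatorname{Sym}^{d+1}W$ with $f=f_1+f_2$. An $m$-dimensional subspace $L\subset\operatorname{Sym}^dV$ is a direct sum if there is a non-trivial decomposition $V=U\oplus W$ and subspaces $L_1\subset\operatorname{Sym}^dU$, $L_2\subset\operatorname{Sym}^dW$ of dimensions $m_1+m_2=m$ with $L=L_1+L_2$; it is a balanced direct sum if moreover $m_1=\dim_kU$, $m_2=\dim_kW$. *)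

From mathcomp Require Import all_boot all_algebra.
From mathcomp Require Import mpoly.
Set Implicit Arguments. Unset Strict Implicit. Unset Printing Implicit Defensive.
Import GRing.Theory.
Local Open Scope ring_scope.

(* Conventions: V = k^n, realised as row vectors 'rV[k]_n; the basis
   x_1..x_n of V is the standard basis, and S = Sym V = {mpoly k[n]},
   with x_i = 'X_i. *)

Definition linform (k : fieldType) (n : nat) (v : 'rV[k]_n) : {mpoly k[n]} :=
  \sum_(i < n) v 0 i *: 'X_i.

(* Sym^m U inside Sym^m V, for a subspace U of V: homogeneous polynomials of
   degree m lying in the subalgebra k[u_1,...,u_r] generated by a basis of U. *)
Definition SymU (k : fieldType) (n : nat) (U : {vspace 'rV[k]_n}) (m : nat)
    (p : {mpoly k[n]}) : Prop :=
  p \is m.-homog /\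
  exists q : {mpoly k[\dim U]},
    p = q \mPo [tuple linform (tnth (vbasis U) i) | i < \dim U].

Definition vdecomp (k : fieldType) (n : nat) (U W : {vspace 'rV[k]_n}) : Prop :=
  (U + W)%VS = fullv /\ (U :&: W)%VS = 0%VS.

Definition form_direct_sum (k : fieldType) (n e : nat) (f : {mpoly k[n]}) : Prop :=
  exists U W : {vspace 'rV[k]_n}, vdecomp U W /\
  exists f1 f2 : {mpoly k[n]},
    [/\ f1 != 0, f2 != 0, SymU U e f1, SymU W e f2 & f = f1 + f2].

(* Finite-dimensional subspaces of S given by finite spanning sequences. *)
Definition inspan (k : fieldType) (n : nat) (s : seq {mpoly k[n]}) (p : {mpoly k[n]}) : Prop :=
  exists c : 'I_(size s) -> k, p = \sum_(i < size s) c i *: s`_i.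

Definition lin_free (k : fieldType) (n : nat) (s : seq {mpoly k[n]}) : Prop :=
  forall c : 'I_(size s) -> k,
    \sum_(i < size s) c i *: s`_i = 0 -> forall i, c i = 0.

Definition same_span (k : fieldType) (n : nat) (s t : seq {mpoly k[n]}) : Prop :=
  forall p, inspan s p <-> inspan t p.

Definition span_dim (k : fieldType) (n : nat) (s : seq {mpoly k[n]}) (m : nat) : Prop :=
  exists b : seq {mpoly k[n]}, [/\ lin_free b, size b = m & same_span b s].

Definition space_direct_sum (k : fieldType) (n : nat) (bal : bool) (e : nat)
    (G : seq {mpoly k[n]}) (m : nat) : Prop :=
  exists U W : {vspace 'rV[k]_n},
    [/\ vdecomp U W, U != 0%VS & W != 0%VS] /\
  exists b1 b2 : seq {mpoly k[n]},
    [/\ lin_free b1, lin_free b2,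
        (forall p, p \in b1 -> SymU U e p),
        (forall p, p \in b2 -> SymU W e p) &
        [/\ (size b1 + size b2)%N = m,
            same_span G (b1 ++ b2) &
            (bal -> size b1 = \dim U /\ size b2 = \dim W)]].

Definition grad (k : fieldType) (n : nat) (f : {mpoly k[n]}) : seq {mpoly k[n]} :=
  [seq mderiv i f | i <- enum 'I_n].

From HB Require Import structures.
From mathcomp Require Import all_boot all_algebra.
From mathcomp Require Import mpoly.
From mathcomp Require Import zify.
Set Implicit Arguments. Unset Strict Implicit. Unset Printing Implicit Defensive.
Import GRing.Theory.
Local Open Scope ring_scope.

(* Write ∂_c for the derivative along c ∈ V, k[U] for the subalgebra generated by
   the linear forms of U ([in_Sym U]), and c ⊥ U when c annihilates U ([perpv U c]).
   For V = U ⊕ W, Euler's formula (d+1) f = Σ x_i ∂_i f, rewritten through the two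
   projections, splits f into a part built from linear forms of U and the ∂_c f with
   c ⊥ W, and a part built from linear forms of W and the ∂_c f with c ⊥ U.  So f is
   a direct sum along U ⊕ W as soon as ∂_c f ∈ k[U] for c ⊥ W and ∂_c f ∈ k[W] for
   c ⊥ U; both parts are nonzero because c ↦ ∂_c f is injective.
   If ⟨∇f⟩ = L1 + L2 with L1 ⊆ Sym^d U, L2 ⊆ Sym^d W and d ≥ 2, take c ⊥ W and write
   ∂_c f = g + h accordingly.  For a ⊥ U, ∂_a h = ∂_a ∂_c f = ∂_c ∂_a f lies in
   k[U] ∩ k[W], which vanishes in positive degree; hence all partial derivatives of h
   vanish and h = 0.  A quadratic form (d = 1) splits off the line of ∂_v f for any v
   with ∂_v ∂_v f ≠ 0, and a linear form (d = 0) in n ≥ 2 variables has a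
   non-injective gradient.
   Conversely, if f = f1 + f2 then ⟨∇f⟩ ⊆ ⟨∇f1⟩ + ⟨∇f2⟩, dim ⟨∇f1⟩ ≤ dim U and
   dim ⟨∇f2⟩ ≤ dim W; since dim ⟨∇f⟩ = n = dim U + dim W these are all equalities,
   which is a balanced splitting of ⟨∇f⟩.
   The hypothesis on char k is used to divide by the degrees 1, ..., d+1. *)

Section Derivatives.
Variables (k : fieldType) (n : nat).
Local Notation P := {mpoly k[n]}.
Local Notation V := 'rV[k]_n.
Implicit Types (p q f : P) (u v c : V).

Lemma mderiv_dhomog m p i : p \is m.-homog -> mderiv i p \is m.-1.-homog.
Proof.
move=> hp; apply/dhomogP => mm; rewrite mcoeff_msupp mcoeff_mderiv.
have [->|nz] := eqVneq (p@_(mm + U_(i))%MM) 0; first by rewrite mul0rn eqxx.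
move=> _; have /= <- := dhomog_mf hp (_ : (mm + U_(i))%MM \in msupp p).
  by rewrite mdegD mdeg1 addn1.
by rewrite mcoeff_msupp.
Qed.

Lemma dhomog0E p : p \is 0.-homog -> p = (p@_0%MM)%:MP.
Proof.
move=> hp; apply/mpolyP => mm; rewrite mcoeffC.
have [->|ne] := eqVneq mm 0%MM; first by rewrite mulr1.
by rewrite mulr0 (dhomog_nemf_coeff hp) // mdeg_eq0.
Qed.

Lemma mpolyC_dhomog_eq0 m (a : k) : (0 < m)%N -> (a%:MP : P) \is m.-homog -> a = 0.
Proof.
move=> m_gt0 hm; have /(_ 0%MM) := dhomog_nemf_coeff hm.
by rewrite mcoeffC eqxx mulr1; apply; rewrite /= mdeg0 eq_sym -lt0n.
Qed.

Lemma euler_mpolyX (mm : 'X_{1..n}) :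
  \sum_(i < n) 'X_i * mderiv i ('X_[mm] : P) = (mdeg mm)%:R *: 'X_[mm].
Proof.
rewrite mdegE natr_sum scaler_suml; apply: eq_bigr => i _.
rewrite mderivX -scalerAr -mpolyXD.
have [->|nz] := eqVneq (mm i) 0%N; first by rewrite !scale0r.
by rewrite addmC submK // lep1mP.
Qed.

Lemma euler m p : p \is m.-homog -> \sum_(i < n) 'X_i * mderiv i p = m%:R *: p.
Proof.
move=> hp; rewrite [p]mpolyE scaler_sumr.
under eq_bigr do rewrite raddf_sum mulr_sumr.
rewrite exchange_big /= big_seq [RHS]big_seq; apply: eq_bigr => mm hm.
under eq_bigr do rewrite mderivZ -scalerAr.
by rewrite -scaler_sumr euler_mpolyX (dhomog_mf hp hm) scalerA mulrC -scalerA.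
Qed.

Lemma linform_is_linear : linear (@linform k n).
Proof.
move=> a u v; rewrite /linform scaler_sumr -big_split; apply: eq_bigr => i _.
by rewrite !mxE scalerDl scalerA.
Qed.

HB.instance Definition _ :=
  GRing.isLinear.Build k V P _ (@linform k n) linform_is_linear.

Lemma linform_dhomog u : linform u \is 1.-homog.
Proof.
by rewrite rpred_sum // => i _; rewrite rpredZ // dhomogX /= mdeg1.
Qed.

Lemma linform_delta i : linform (delta_mx 0 i : V) = 'X_i.
Proof.
rewrite /linform (bigD1 i) //= big1 ?addr0 => [|j ji]; first by rewrite mxE !eqxx scale1r.
by rewrite mxE eqxx (negbTE ji) scale0r.
Qed.

Lemma mderiv_linform i u : mderiv i (linform u) = (u 0 i)%:MP.
Proof.
rewrite linear_sum (bigD1 i) //= big1 ?addr0 => [|j ji].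
  rewrite mderivZ mderivX mnm1E eqxx.
  have -> : (U_(i) - U_(i) = 0 :> 'X_{1..n})%MM by apply/mnmP => l; rewrite !mnmE subnn.
  rewrite mpolyX0 scale1r.
  by rewrite -mul_mpolyC mulr1.
by rewrite mderivZ mderivX mnm1E (negbTE ji) scale0r scaler0.
Qed.

Lemma dhomog1E p : p \is 1.-homog -> p = linform (\row_i (mderiv i p)@_0%MM).
Proof.
move=> hp; rewrite -[p in LHS]scale1r -(euler hp); apply: eq_bigr => i _.
by rewrite mxE {1}(dhomog0E (mderiv_dhomog i hp)) mulrC mul_mpolyC.
Qed.

Definition mderivv c p : P := \sum_i c 0 i *: mderiv i p.

Lemma mderivv_is_linear c : linear (mderivv c).
Proof.
move=> a p q; rewrite /mderivv scaler_sumr -big_split; apply: eq_bigr => i _ /=.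
by rewrite linearP scalerDr !scalerA mulrC.
Qed.

HB.instance Definition _ c :=
  GRing.isLinear.Build k P P _ (mderivv c) (mderivv_is_linear c).

Lemma mderivvDl c1 c2 p : mderivv (c1 + c2) p = mderivv c1 p + mderivv c2 p.
Proof. by rewrite /mderivv -big_split; apply: eq_bigr => i _; rewrite mxE scalerDl. Qed.

Lemma mderivvZl a c p : mderivv (a *: c) p = a *: mderivv c p.
Proof. by rewrite /mderivv scaler_sumr; apply: eq_bigr => i _; rewrite mxE scalerA. Qed.

Lemma mderivv_delta i p : mderivv (delta_mx 0 i) p = mderiv i p.
Proof.
rewrite /mderivv (bigD1 i) //= big1 ?addr0 => [|j ji]; first by rewrite mxE !eqxx scale1r.
by rewrite mxE eqxx (negbTE ji) scale0r.
Qed.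

Lemma mderivv_comm c c' p : mderivv c (mderivv c' p) = mderivv c' (mderivv c p).
Proof.
rewrite /mderivv; under eq_bigr do rewrite [mderiv _ _]raddf_sum scaler_sumr.
under [RHS]eq_bigr do rewrite [mderiv _ _]raddf_sum scaler_sumr.
rewrite exchange_big; apply: eq_bigr => i _; apply: eq_bigr => j _ /=.
by rewrite !mderivZ !scalerA mderiv_comm mulrC.
Qed.

Lemma mderivv_dhomog m c p : p \is m.-homog -> mderivv c p \is m.-1.-homog.
Proof. by move=> hp; rewrite rpred_sum // => i _; rewrite rpredZ // mderiv_dhomog. Qed.

Definition nondegenerate f := forall c, mderivv c f = 0 -> c = 0.

Definition dotv u c : k := \sum_i u 0 i * c 0 i.

Lemma dotvDl u v c : dotv (u + v) c = dotv u c + dotv v c.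
Proof. by rewrite /dotv -big_split; apply: eq_bigr => i _; rewrite mxE mulrDl. Qed.

Lemma dotvZl a u c : dotv (a *: u) c = a * dotv u c.
Proof. by rewrite /dotv mulr_sumr; apply: eq_bigr => i _; rewrite mxE mulrA. Qed.

Lemma dotvDr u c c' : dotv u (c + c') = dotv u c + dotv u c'.
Proof. by rewrite /dotv -big_split; apply: eq_bigr => i _; rewrite mxE mulrDr. Qed.

Lemma dotvZr a u c : dotv u (a *: c) = a * dotv u c.
Proof. by rewrite /dotv mulr_sumr; apply: eq_bigr => i _; rewrite mxE mulrCA. Qed.

Lemma dotv0l c : dotv 0 c = 0.
Proof. by rewrite /dotv big1 // => i _; rewrite mxE mul0r. Qed.

Lemma dotv0r u : dotv u 0 = 0.
Proof. by rewrite /dotv big1 // => i _; rewrite mxE mulr0. Qed.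

Lemma dotv_suml I (s : seq I) (F : I -> V) c :
  dotv (\sum_(x <- s) F x) c = \sum_(x <- s) dotv (F x) c.
Proof.
by elim/big_rec2: _ => [|x a b _ <-]; rewrite ?dotv0l ?dotvDl.
Qed.

Lemma dotv_deltal i c : dotv (delta_mx 0 i) c = c 0 i.
Proof.
rewrite /dotv (bigD1 i) //= big1 ?addr0 => [|j ji]; first by rewrite mxE !eqxx mul1r.
by rewrite mxE eqxx (negbTE ji) mul0r.
Qed.

Lemma dotv_deltar u j : dotv u (delta_mx 0 j) = u 0 j.
Proof.
rewrite /dotv (bigD1 j) //= big1 ?addr0 => [|i ij]; first by rewrite mxE !eqxx mulr1.
by rewrite mxE eqxx (negbTE ij) mulr0.
Qed.

Lemma mderivv_linform c u : mderivv c (linform u) = (dotv u c)%:MP.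
Proof.
rewrite /mderivv /dotv rmorph_sum; apply: eq_bigr => i _ /=.
by rewrite mderiv_linform -mul_mpolyC -rmorphM mulrC.
Qed.

End Derivatives.

Section ChainRule.
Variables (k : fieldType) (n r : nat) (t : r.-tuple {mpoly k[n]}).

Let chain_rule_for (q : {mpoly k[r]}) := forall i,
  mderiv i (q \mPo t) = \sum_(j < r) (mderiv j q \mPo t) * mderiv i t`_j.

Let chain_rule_lin a p q :
  chain_rule_for p -> chain_rule_for q -> chain_rule_for (a *: p + q).
Proof.
move=> hp hq i; rewrite comp_mpolyD comp_mpolyZ mderivD mderivZ hp hq.
rewrite scaler_sumr -big_split /=; apply: eq_bigr => j _.
by rewrite mderivD mderivZ comp_mpolyD comp_mpolyZ mulrDl scalerAl.
Qed.

Let chain_rule_mul p q :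
  chain_rule_for p -> chain_rule_for q -> chain_rule_for (p * q).
Proof.
move=> hp hq i; rewrite rmorphM /= mderivM hp hq mulr_suml mulr_sumr -big_split /=.
apply: eq_bigr => j _; rewrite mderivM rmorphD /= !rmorphM /= mulrDl.
by congr (_ + _); rewrite -!mulrA; congr (_ * _); rewrite mulrC.
Qed.

Let chain_rule1 : chain_rule_for 1.
Proof.
move=> i; rewrite comp_mpoly1 -mpolyC1 mderivC big1 // => j _.
by rewrite mderivC comp_mpoly0 mul0r.
Qed.

Let chain_ruleX j : chain_rule_for 'X_j.
Proof.
move=> i; rewrite comp_mpolyXU (bigD1 j) //= mderivX mnm1E eqxx.
have -> : (U_(j) - U_(j) = 0 :> 'X_{1..r})%MM by apply/mnmP => l; rewrite !mnmE subnn.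
rewrite mpolyX0 scale1r comp_mpoly1 mul1r big1 ?addr0 // => l lj.
by rewrite mderivX mnm1E eq_sym (negbTE lj) scale0r comp_mpoly0 mul0r.
Qed.

Lemma mderiv_comp_mpoly i (q : {mpoly k[r]}) :
  mderiv i (q \mPo t) = \sum_(j < r) (mderiv j q \mPo t) * mderiv i t`_j.
Proof.
move: i; elim/mpolyind: q => [|a m p _ _ hp].
  by move=> i; rewrite comp_mpoly0 mderiv0 big1 // => j _; rewrite mderiv0 comp_mpoly0 mul0r.
apply: chain_rule_lin => //; rewrite mpolyXE_id.
apply: (big_ind chain_rule_for chain_rule1 chain_rule_mul) => j _.
elim: (m j) => [|e ih]; first by rewrite expr0.
by rewrite exprS; apply: chain_rule_mul => //; apply: chain_ruleX.
Qed.

End ChainRule.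

Section Spans.
Variables (k : fieldType) (n : nat).
Local Notation P := {mpoly k[n]}.
Implicit Types (p : P) (s t : seq P).

Lemma inspanE s m (e : size s = m) p :
  inspan s p <-> exists a : 'I_m -> k, p = \sum_(i < m) a i *: s`_i.
Proof. by case: m / e. Qed.

Lemma lin_freeE s m (e : size s = m) : lin_free s <->
  forall a : 'I_m -> k, \sum_(i < m) a i *: s`_i = 0 -> forall i, a i = 0.
Proof. by case: m / e. Qed.

Lemma inspan_mem s p : p \in s -> inspan s p.
Proof.
move=> p_in; have idx : (index p s < size s)%N by rewrite index_mem.
exists (fun i => (i == Ordinal idx)%:R).
rewrite (bigD1 (Ordinal idx)) //= eqxx scale1r nth_index // big1 ?addr0 // => i /negbTE ->.
by rewrite scale0r.
Qed.

Lemma inspan_cat s t p : inspan (s ++ t) p ->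
  exists g h, [/\ inspan s g, inspan t h & p = g + h].
Proof.
move/(inspanE (size_cat s t)) => -[a ->]; rewrite big_split_ord /=.
exists (\sum_(i < size s) a (lshift (size t) i) *: s`_i).
exists (\sum_(i < size t) a (rshift (size s) i) *: t`_i).
split; [by exists (fun i => a (lshift (size t) i)) | by exists (fun i => a (rshift (size s) i)) |].
congr (_ + _); apply: eq_bigr => i _; rewrite nth_cat /=.
  by rewrite ltn_ord.
by rewrite ltnNge leq_addr addKn.
Qed.

End Spans.

Section SymSubalgebra.
Variables (k : fieldType) (n : nat) (U : {vspace 'rV[k]_n}).
Local Notation P := {mpoly k[n]}.
Local Notation V := 'rV[k]_n.
Implicit Types (p q : P) (u c : V).

Local Notation tU := [tuple linform (tnth (vbasis U) i) | i < \dim U].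

Definition in_Sym p := exists q : {mpoly k[\dim U]}, p = q \mPo tU.

Definition perpv c := forall u, u \in U -> dotv u c = 0.

Lemma in_Sym_sum I (s : seq I) (F : I -> P) :
  (forall i, in_Sym (F i)) -> in_Sym (\sum_(i <- s) F i).
Proof.
move=> hF; elim/big_rec: _ => [|i x _ [q ->]]; first by exists 0; rewrite comp_mpoly0.
by have [q' ->] := hF i; exists (q' + q); rewrite comp_mpolyD.
Qed.

Lemma in_SymZ a p : in_Sym p -> in_Sym (a *: p).
Proof. by move=> [q ->]; exists (a *: q); rewrite comp_mpolyZ. Qed.

Lemma in_SymM p q : in_Sym p -> in_Sym q -> in_Sym (p * q).
Proof. by move=> [p' ->] [q' ->]; exists (p' * q'); rewrite rmorphM. Qed.

Lemma in_SymC a : in_Sym a%:MP.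
Proof. by exists a%:MP; rewrite comp_mpolyC. Qed.

Lemma in_Sym_linform u : u \in U -> in_Sym (linform u).
Proof.
move=> hu; exists (\sum_(j < \dim U) coord (vbasis U) j u *: 'X_j).
have -> : linform u = \sum_(j < \dim U) coord (vbasis U) j u *: linform (vbasis U)`_j.
  by rewrite {1}(coord_vbasis hu) linear_sum; apply: eq_bigr => j _; rewrite linearZ.
rewrite raddf_sum; apply: eq_bigr => j _ /=.
by rewrite comp_mpolyZ comp_mpolyXU nth_mktuple (tnth_nth 0).
Qed.

Lemma mderivv_comp_mpoly c (q : {mpoly k[\dim U]}) : mderivv c (q \mPo tU) =
  \sum_(j < \dim U) (mderiv j q \mPo tU) * (dotv (vbasis U)`_j c)%:MP.
Proof.
rewrite /mderivv; under eq_bigr do rewrite mderiv_comp_mpoly scaler_sumr.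
rewrite exchange_big /=; apply: eq_bigr => j _.
under eq_bigr do rewrite nth_mktuple (tnth_nth 0) mderiv_linform scalerAr.
rewrite -mulr_sumr /dotv; congr (_ * _); rewrite rmorph_sum; apply: eq_bigr => i _ /=.
by rewrite -mul_mpolyC -rmorphM mulrC.
Qed.

Lemma in_Sym_mderivv c p : in_Sym p -> in_Sym (mderivv c p).
Proof.
move=> [q ->]; rewrite mderivv_comp_mpoly; apply: in_Sym_sum => j.
by apply: in_SymM; [exists (mderiv j q) | exact: in_SymC].
Qed.

Lemma mderivv_perp c p : perpv c -> in_Sym p -> mderivv c p = 0.
Proof.
move=> hc [q ->]; rewrite mderivv_comp_mpoly big1 // => j _.
by rewrite hc ?mulr0 // vbasis_mem // mem_nth // size_tuple.
Qed.

Lemma SymU_mderivv_span m p : SymU U m.+1 p -> exists G : seq P,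
  [/\ size G = \dim U, {in G, forall y, y \is m.-homog} & forall c, inspan G (mderivv c p)].
Proof.
move=> [hp [q p_q]].
(* q need not be homogeneous: keep only the degree-m parts of its derivatives. *)
exists [seq pihomog mdeg m (mderiv j q \mPo tU) | j <- enum 'I_(\dim U)].
have size_G : size [seq pihomog mdeg m (mderiv j q \mPo tU) | j <- enum 'I_(\dim U)] = \dim U.
  by rewrite size_map size_enum_ord.
split=> // [_ /mapP [j _ ->] | c]; first exact: pihomogP.
apply/(inspanE size_G); exists (fun j => dotv (vbasis U)`_j c).
have hc : mderivv c p \is m.-homog := mderivv_dhomog c hp.
rewrite -[LHS](pihomog_dE hc) p_q mderivv_comp_mpoly linear_sum.
apply: eq_bigr => j _ /=; rewrite (nth_map j) ?size_enum_ord // nth_ord_enum.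
by rewrite mulrC mul_mpolyC linearZ.
Qed.

Lemma SymU_dim0 m p : \dim U = 0%N -> (0 < m)%N -> SymU U m p -> p = 0.
Proof.
move=> U0 m_gt0 [hp [q hq]].
suff [a pa] : exists a, p = a%:MP.
  by move: hp; rewrite pa => /(mpolyC_dhomog_eq0 m_gt0) ->; rewrite mpolyC0.
rewrite hq comp_mpolyEX; exists (\sum_(m <- msupp q) q@_m).
rewrite rmorph_sum; apply: eq_bigr => mm _.
rewrite comp_mpolyX big1 ?scaler1 -?mul_mpolyC ?mulr1 // => i _.
by exfalso; have := ltn_ord i; move: (val i); rewrite U0.
Qed.

End SymSubalgebra.

Section CharacteristicBound.
Variables (k : fieldType) (n d : nat).
Hypothesis hchar : forall p : nat, p \in [pchar k] -> ~~ (p %| (d.+1)`!)%N.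

Lemma natf_neq0_fact m : (0 < m <= d.+1)%N -> (m%:R : k) != 0.
Proof.
move=> /andP[m_gt0 m_le]; apply/negP => m0; have [p hp] := natf0_pchar m_gt0 m0.
have m_dvd : (m %| (d.+1)`!)%N by apply: dvdn_fact; rewrite m_gt0 m_le.
by have := hchar hp; rewrite (dvdn_trans _ m_dvd) // (dvdn_pcharf hp).
Qed.

Lemma mderiv_eq0_dhomog m (p : {mpoly k[n]}) : (0 < m <= d.+1)%N ->
  p \is m.-homog -> (forall i, mderiv i p = 0) -> p = 0.
Proof.
move=> hm hp p'0; have := euler hp; rewrite big1 => [/esym/eqP|i _]; last first.
  by rewrite p'0 mulr0.
by rewrite scaler_eq0 (negbTE (natf_neq0_fact hm)) => /eqP.
Qed.

End CharacteristicBound.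

Section Decomposition.
Variables (k : fieldType) (n : nat).
Local Notation P := {mpoly k[n]}.
Local Notation V := 'rV[k]_n.
Implicit Types (p q f : P) (u v c : V).

Definition adjv (A : 'End(V)) c : V := \row_i dotv (A (delta_mx 0 i)) c.

Lemma dotv_adjv (A : 'End(V)) u c : dotv u (adjv A c) = dotv (A u) c.
Proof.
rewrite {2}[u]row_sum_delta linear_sum dotv_suml; apply: eq_bigr => i _ /=.
by rewrite linearZ dotvZl mxE.
Qed.

Lemma vdecomp_sym (U W : {vspace V}) : vdecomp U W -> vdecomp W U.
Proof. by rewrite /vdecomp addvC capvC. Qed.

Lemma dim_vdecomp (U W : {vspace V}) : vdecomp U W -> (\dim U + \dim W)%N = n.
Proof.
move=> [UW_full UW_cap].
by rewrite -dimv_sum_cap UW_full UW_cap dimv0 addn0 dimvf /dim /= mul1n.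
Qed.

Definition euler_part (A : 'End(V)) p := \sum_i linform (A (delta_mx 0 i)) * mderiv i p.

Lemma euler_part_dhomog (A : 'End(V)) m p :
  p \is m.+1.-homog -> euler_part A p \is m.+1.-homog.
Proof.
move=> hp; rewrite rpred_sum // => i _.
by rewrite -[m.+1]add1n; apply: dhomogM; [exact: linform_dhomog | exact: mderiv_dhomog hp].
Qed.

Lemma euler_part_idem (A : 'End(V)) p :
  (forall x, A (A x) = A x) ->
  euler_part A p = \sum_j linform (A (delta_mx 0 j)) * mderivv (adjv A (delta_mx 0 j)) p.
Proof.
move=> AA; under [RHS]eq_bigr do rewrite mulr_sumr.
rewrite exchange_big /=; apply: eq_bigr => i _.
under eq_bigr do rewrite mxE dotv_deltar -scalerAr scalerAl.
rewrite -mulr_suml; congr (_ * _).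
rewrite -[in LHS]AA {1}(row_sum_delta (A (delta_mx 0 i))) !linear_sum.
by apply: eq_bigr => j _ /=; rewrite !linearZ.
Qed.

Section Projections.
Variables (U W : {vspace V}).
Hypothesis UW : vdecomp U W.
Local Notation pU := (daddv_pi U W).
Local Notation pW := (daddv_pi W U).

Lemma daddv_pi_vdecomp x : pU x + pW x = x.
Proof. by case: UW => full cap; apply: daddv_pi_add; rewrite // full memvf. Qed.

Lemma daddv_pi_compl_eq0 u : u \in U -> pW u = 0.
Proof.
move=> hu; have := daddv_pi_vdecomp u; rewrite daddv_pi_id //; last by case: UW.
by move/(canRL (addKr u)); rewrite addNr.
Qed.

Lemma perpv_adjv c : perpv U (adjv pW c).
Proof. by move=> u hu; rewrite dotv_adjv daddv_pi_compl_eq0 // dotv0l. Qed.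

Lemma adjv_vdecomp c : adjv pU c + adjv pW c = c.
Proof.
by apply/rowP => i; rewrite !mxE -dotvDl daddv_pi_vdecomp dotv_deltal.
Qed.

Lemma euler_part_vdecomp m p :
  p \is m.-homog -> euler_part pU p + euler_part pW p = m%:R *: p.
Proof.
move=> hp; rewrite -(euler hp) -big_split; apply: eq_bigr => i _ /=.
by rewrite -mulrDl -linearD /= daddv_pi_vdecomp linform_delta.
Qed.

End Projections.

Lemma perpv_split (U W : {vspace V}) c :
  vdecomp U W -> exists a b, [/\ c = a + b, perpv U a & perpv W b].
Proof.
move=> UW; exists (adjv (daddv_pi W U) c), (adjv (daddv_pi U W) c).
split; first by rewrite addrC adjv_vdecomp.
  exact: perpv_adjv UW c.
exact: perpv_adjv (vdecomp_sym UW) c.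
Qed.

Lemma in_Sym_euler_part (U W : {vspace V}) p :
  vdecomp U W -> (forall c, perpv W c -> in_Sym U (mderivv c p)) ->
  in_Sym U (euler_part (daddv_pi U W) p).
Proof.
move=> UW hp; rewrite euler_part_idem; last by case: UW => _ cap x; rewrite daddv_pi_proj.
apply: in_Sym_sum => j; apply: in_SymM; first by apply/in_Sym_linform/memv_pi.
exact/hp/(perpv_adjv (vdecomp_sym UW)).
Qed.

Lemma nondegenerate_in_Sym (U W : {vspace V}) f :
  vdecomp U W -> nondegenerate f -> in_Sym U f -> W = 0%VS.
Proof.
move=> UW ndf hf; apply/eqP; rewrite -subv0; apply/subvP => w hw; rewrite memv0.
apply/eqP/rowP => j; rewrite mxE -dotv_deltar.
have [a [b [-> aU bW]]] := perpv_split (delta_mx 0 j) UW.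
by rewrite dotvDr bW // (ndf a (mderivv_perp aU hf)) dotv0r add0r.
Qed.

Variable d : nat.
Hypothesis hchar : forall p : nat, p \in [pchar k] -> ~~ (p %| (d.+1)`!)%N.

Lemma in_Sym_cap_eq0 (U W : {vspace V}) m p : vdecomp U W -> (0 < m <= d.+1)%N ->
  p \is m.-homog -> in_Sym U p -> in_Sym W p -> p = 0.
Proof.
move=> UW hm hp pU pW; apply: (mderiv_eq0_dhomog hchar hm hp) => i.
rewrite -mderivv_delta; have [a [b [-> aU bW]]] := perpv_split (delta_mx 0 i) UW.
by rewrite mderivvDl (mderivv_perp aU) ?(mderivv_perp bW) ?addr0.
Qed.

Lemma form_direct_sum_of_perp (U W : {vspace V}) f : vdecomp U W ->
  U != 0%VS -> W != 0%VS -> f \is d.+1.-homog -> nondegenerate f ->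
  (forall c, perpv U c -> in_Sym W (mderivv c f)) ->
  (forall c, perpv W c -> in_Sym U (mderivv c f)) ->
  form_direct_sum d.+1 f.
Proof.
move=> UW U0 W0 hf ndf hfW hfU.
set fU := (d.+1)%:R^-1 *: euler_part (daddv_pi U W) f.
set fW := (d.+1)%:R^-1 *: euler_part (daddv_pi W U) f.
have fUS : SymU U d.+1 fU.
  by split; [rewrite rpredZ ?euler_part_dhomog | exact/in_SymZ/in_Sym_euler_part].
have fWS : SymU W d.+1 fW.
  split; first by rewrite rpredZ ?euler_part_dhomog.
  exact/in_SymZ/(in_Sym_euler_part (vdecomp_sym UW)).
have f_eq : f = fU + fW.
  rewrite -scalerDr (euler_part_vdecomp UW hf) scalerA mulVf ?scale1r //.
  by rewrite (natf_neq0_fact hchar) // leqnn.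
exists U, W; split => //; exists fU, fW; split => //.
- apply: contraNneq U0 => fU0; apply/eqP/(nondegenerate_in_Sym (vdecomp_sym UW) ndf).
  by rewrite f_eq fU0 add0r; case: fWS.
- apply: contraNneq W0 => fW0; apply/eqP/(nondegenerate_in_Sym UW ndf).
  by rewrite f_eq fW0 addr0; case: fUS.
Qed.

End Decomposition.

Section GradientSpans.
Variables (k : fieldType) (n : nat).
Local Notation P := {mpoly k[n]}.
Local Notation V := 'rV[k]_n.
Implicit Types (p q f : P) (c : V) (s t : seq P).

Lemma size_grad f : size (grad f) = n.
Proof. by rewrite size_map size_enum_ord. Qed.

Lemma nth_grad f (i : 'I_n) : (grad f)`_i = mderiv i f.
Proof. by rewrite (nth_map i) ?size_enum_ord // nth_ord_enum. Qed.

Lemma inspan_grad f c : inspan (grad f) (mderivv c f).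
Proof.
apply/(inspanE (size_grad f)); exists (fun j => c 0 j).
by apply: eq_bigr => j _; rewrite nth_grad.
Qed.

Lemma lin_free_grad_nondegenerate f : lin_free (grad f) -> nondegenerate f.
Proof.
move/(lin_freeE (size_grad f)) => free_f c fc0; apply/rowP => i; rewrite mxE.
apply: (free_f (fun j => c 0 j)); rewrite -[RHS]fc0; apply: eq_bigr => j _.
by rewrite nth_grad.
Qed.

Lemma inspan_SymU (U : {vspace V}) m s p :
  (forall y, y \in s -> SymU U m y) -> inspan s p -> SymU U m p.
Proof.
move=> sU [a ->]; have sU_i (i : 'I_(size s)) : SymU U m s`_i by apply/sU; rewrite mem_nth.
split; first by rewrite rpred_sum // => i _; rewrite rpredZ //; case: (sU_i i).
by apply: in_Sym_sum => i; apply: in_SymZ; case: (sU_i i).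
Qed.

End GradientSpans.

Section Hyperplane.
Variables (k : fieldType) (n : nat) (lam v : 'rV[k]_n).
Local Notation V := 'rV[k]_n.
Hypothesis lam_v : dotv lam v != 0.
Local Notation gen i := (delta_mx 0 i - (v 0 i / dotv lam v) *: lam)%R.

Definition hyperplane : {vspace V} := <<[seq gen i | i <- enum 'I_n]>>%VS.

Lemma mem_hyperplane x : (x \in hyperplane) = (dotv x v == 0).
Proof.
apply/idP/eqP => [/coord_span -> | xv0].
  rewrite dotv_suml big1 // => i _; rewrite dotvZl; set X := map_tuple _ _.
  have /mapP [j _ ->] : X`_i \in [seq gen j | j <- enum 'I_n].
    by rewrite (mem_nth 0) ?size_tuple.
  by rewrite dotvDl -scaleN1r !dotvZl dotv_deltal divfK // mulN1r subrr mulr0.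
suff -> : x = \sum_i x 0 i *: gen i.
  by apply: memv_suml => i _; apply/memvZ/memv_span/map_f; rewrite mem_enum.
under eq_bigr do rewrite scalerBr scalerA.
rewrite sumrB -scaler_suml -row_sum_delta.
suff -> : \sum_i x 0 i * (v 0 i / dotv lam v) = 0 by rewrite scale0r subr0.
by under eq_bigr do rewrite mulrA; rewrite -mulr_suml -/(dotv x v) xv0 mul0r.
Qed.

Lemma hyperplane_vdecomp : vdecomp <[lam]> hyperplane.
Proof.
split.
  apply/eqP; rewrite eqEsubv subvf /=; apply/subvP => x _.
  rewrite -(subrK ((dotv x v / dotv lam v) *: lam) x) addrC memv_add ?memvZ ?memv_line //.
  by rewrite mem_hyperplane dotvDl -scaleN1r !dotvZl divfK // mulN1r subrr.
apply/eqP; rewrite -subv0; apply/subvP => x /memv_capP [/vlineP [a ->]].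
rewrite mem_hyperplane dotvZl mulf_eq0 (negbTE lam_v) orbF => /eqP ->.
by rewrite scale0r mem0v.
Qed.

Lemma perpv_hyperplane c : perpv hyperplane c -> c = (dotv lam c / dotv lam v) *: v.
Proof.
move=> cW; apply/rowP => i; rewrite mxE.
have /cW : gen i \in hyperplane by apply/memv_span/map_f; rewrite mem_enum.
rewrite dotvDl -scaleN1r !dotvZl dotv_deltal mulN1r => /eqP; rewrite subr_eq0 => /eqP ->.
by rewrite mulrAC [in RHS]mulrAC (mulrC (v 0 i)).
Qed.

End Hyperplane.

Section LowDegree.
Variables (k : fieldType) (n : nat).
Local Notation P := {mpoly k[n]}.
Local Notation V := 'rV[k]_n.
Implicit Types (f : P) (c v : V).

Lemma delta_row_neq0 i : delta_mx 0 i != 0 :> V.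
Proof. by apply/eqP => /rowP /(_ i); rewrite !mxE !eqxx; apply/eqP/oner_neq0. Qed.

Lemma linform_degenerate f : (1 < n)%N -> f \is 1.-homog -> ~ nondegenerate f.
Proof.
move=> n_gt1 /dhomog1E ->; set lam := \row_i _.
pose i0 : 'I_n := Ordinal (ltnW n_gt1); pose i1 : 'I_n := Ordinal n_gt1.
have [lam0|lam0] := eqVneq (lam 0 i0) 0 => ndf.
  have /ndf/eqP : mderivv (delta_mx 0 i0) (linform lam) = 0.
    by rewrite mderivv_linform dotv_deltar lam0 mpolyC0.
  by rewrite (negbTE (delta_row_neq0 i0)).
pose c : V := lam 0 i1 *: delta_mx 0 i0 - lam 0 i0 *: delta_mx 0 i1.
have /ndf/rowP/(_ i1) : mderivv c (linform lam) = 0.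
  by rewrite mderivv_linform dotvDr -scaleN1r !dotvZr !dotv_deltar mulN1r mulrC subrr mpolyC0.
rewrite !mxE !eqxx /= mulr0 add0r mulr1 => /eqP; rewrite oppr_eq0.
by apply/negP; move: lam0; rewrite mxE.
Qed.

Hypothesis hchar : forall p : nat, p \in [pchar k] -> ~~ (p %| 2`!)%N.

Lemma exists_anisotropic f : (0 < n)%N -> f \is 2.-homog -> nondegenerate f ->
  exists v, mderivv v (mderivv v f) != 0.
Proof.
move=> n_gt0 hf ndf.
have [/existsP [i /existsP [j fij]] | /existsPn f''0] :=
  boolP [exists i, exists j, mderiv i (mderiv j f) != 0].
  have [fii|] := eqVneq (mderiv i (mderiv i f)) 0; last first.
    by exists (delta_mx 0 i); rewrite !mderivv_delta.
  have [fjj|] := eqVneq (mderiv j (mderiv j f)) 0; last first.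
    by exists (delta_mx 0 j); rewrite !mderivv_delta.
  exists (delta_mx 0 i + delta_mx 0 j).
  rewrite !mderivvDl !linearD /= !mderivv_delta fii fjj add0r addr0 mderiv_comm.
  by rewrite -mulr2n -scaler_nat scaler_eq0 negb_or mderiv_comm fij andbT (natf_neq0_fact hchar).
pose i0 := Ordinal n_gt0; suff /ndf/eqP : mderivv (delta_mx 0 i0) f = 0.
  by rewrite (negbTE (delta_row_neq0 i0)).
rewrite mderivv_delta; apply: (mderiv_eq0_dhomog hchar (m := 1)) => // [|j].
  exact: mderiv_dhomog hf.
by have := f''0 j; rewrite negb_exists => /forallP /(_ i0); rewrite negbK => /eqP.
Qed.

Lemma form_direct_sum_quadratic f : (1 < n)%N -> f \is 2.-homog -> nondegenerate f ->
  form_direct_sum 2 f.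
Proof.
move=> n_gt1 hf ndf; have [v fvv] := exists_anisotropic (ltnW n_gt1) hf ndf.
have /dhomog1E l_lam := mderivv_dhomog v hf.
set lam := \row_i _ in l_lam.
have lam_v : dotv lam v != 0.
  by apply: contraNneq fvv => lv0; rewrite l_lam mderivv_linform lv0 mpolyC0.
have UW := hyperplane_vdecomp lam_v.
apply: (form_direct_sum_of_perp hchar UW) => //.
- apply: contraNneq lam_v => lam0; have := memv_line lam.
  by rewrite lam0 memv0 => /eqP ->; rewrite dotv0l.
- rewrite -dimv_eq0; have := dim_vdecomp UW; rewrite dim_vline.
  by case: (lam != 0) => /=; lia.
- move=> c cU; have /dhomog1E -> := mderivv_dhomog c hf.
  apply/in_Sym_linform; rewrite (mem_hyperplane lam_v) -(mpolyC_eq0 n) -mderivv_linform.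
  rewrite -dhomog1E ?(mderivv_dhomog c hf) // mderivv_comm l_lam mderivv_linform.
  by rewrite cU ?memv_line // mpolyC0.
- move=> c /perpv_hyperplane ->; rewrite mderivvZl l_lam.
  exact/in_SymZ/in_Sym_linform/memv_line.
Qed.

End LowDegree.

Section HigherDegree.
Variables (k : fieldType) (n d : nat).
Hypothesis hchar : forall p : nat, p \in [pchar k] -> ~~ (p %| (d.+1)`!)%N.
Local Notation P := {mpoly k[n]}.
Local Notation V := 'rV[k]_n.
Implicit Types (f : P) (c : V).

Definition grad_splits (U W : {vspace V}) f :=
  forall c, exists g h, [/\ SymU U d g, SymU W d h & mderivv c f = g + h].

Lemma grad_splitsC U W f : grad_splits U W f -> grad_splits W U f.
Proof. by move=> fUW c; have [g [h [gU hW ->]]] := fUW c; exists h, g; rewrite addrC. Qed.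

Lemma grad_splits_of_space bal f : space_direct_sum bal d (grad f) n ->
  exists U W, [/\ vdecomp U W, U != 0%VS, W != 0%VS & grad_splits U W f].
Proof.
move=> [U [W [[UW U0 W0] [b1 [b2 [_ _ b1U b2W [_ span_eq _]]]]]]].
exists U, W; split => // c.
have [g [h [gb1 hb2 ->]]] := inspan_cat ((span_eq _).1 (inspan_grad f c)).
by exists g, h; split => //; [exact: inspan_SymU b1U gb1 | exact: inspan_SymU b2W hb2].
Qed.

Lemma in_Sym_mderivv_perp U W f : (1 < d)%N -> vdecomp U W -> grad_splits U W f ->
  forall c, perpv W c -> in_Sym U (mderivv c f).
Proof.
move=> d_gt1 UW fUW c cW; have [g [h [[_ gU] [hd hW] fc]]] := fUW c.
rewrite fc; suff -> : h = 0 by rewrite addr0.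
apply: (mderiv_eq0_dhomog hchar _ hd) => [|i]; first by rewrite (ltnW d_gt1) leqW.
rewrite -mderivv_delta; have [a [b [-> aU bW]]] := perpv_split (delta_mx 0 i) UW.
rewrite mderivvDl (mderivv_perp bW hW) addr0.
have [g' [h' [[_ g'U] [_ h'W] fa]]] := fUW a.
have ah : mderivv c g' = mderivv a h.
  have := congr1 (mderivv a) fc; rewrite mderivv_comm fa !linearD /=.
  by rewrite (mderivv_perp aU gU) (mderivv_perp cW h'W) add0r addr0.
apply: (in_Sym_cap_eq0 hchar UW (m := d.-1)); first lia.
- exact: mderivv_dhomog hd.
- by rewrite -ah; apply: in_Sym_mderivv.
- exact: in_Sym_mderivv.
Qed.

End HigherDegree.

Lemma form_direct_sum_of_space (k : fieldType) (n d : nat) bal (f : {mpoly k[n]}) :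
  (forall p : nat, p \in [pchar k] -> ~~ (p %| (d.+1)`!)%N) ->
  f \is d.+1.-homog -> nondegenerate f ->
  space_direct_sum bal d (grad f) n -> form_direct_sum d.+1 f.
Proof.
move=> hchar hf ndf /grad_splits_of_space [U [W [UW U0 W0 fUW]]].
have n_gt1 : (1 < n)%N.
  by move: U0 W0 (dim_vdecomp UW); rewrite -!dimv_eq0; lia.
case: d hchar hf fUW => [|[|d]] hchar hf fUW.
- by case: (linform_degenerate n_gt1 hf ndf).
- exact: (form_direct_sum_quadratic hchar n_gt1 hf ndf).
apply: (form_direct_sum_of_perp hchar UW U0 W0 hf ndf).
  exact: (in_Sym_mderivv_perp hchar isT (vdecomp_sym UW) (grad_splitsC fUW)).
exact: (in_Sym_mderivv_perp hchar isT UW fUW).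
Qed.

Lemma memv_spanE (K : fieldType) (vT : vectType K) (X : seq vT) m (e : size X = m) v :
  v \in <<X>>%VS <-> exists a : 'I_m -> K, v = \sum_(i < m) a i *: X`_i.
Proof.
case: m / e; split => [/(coord_span (X := in_tuple X)) -> | [a ->]]; first by eexists.
by apply: memv_suml => i _; apply/memvZ/memv_span/mem_nth.
Qed.

Lemma freeE_seq (K : fieldType) (vT : vectType K) (X : seq vT) m (e : size X = m) :
  free X <-> forall a : 'I_m -> K, \sum_(i < m) a i *: X`_i = 0 -> forall i, a i = 0.
Proof. by case: m / e; apply: iff_sym; apply: rwP; apply: (freeP (X := in_tuple X)). Qed.

Section HomogeneousSpans.
Variables (k : fieldType) (n d : nat).
Local Notation P := {mpoly k[n.+1]}.
Local Notation H := (dhomog n.+1 k d).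
Implicit Types (p q : P) (s t : seq P).

(* Junk value: [to_dhomog p = 0] when [p] is not homogeneous of degree [d]. *)
Definition to_dhomog p : H := indhomog d p.

Definition spanH s := <<map to_dhomog s>>%VS.

Lemma val_to_dhomog p : p \is d.-homog -> val (to_dhomog p) = p.
Proof. by move=> hp; rewrite /to_dhomog /indhomog insubdK. Qed.

Lemma to_dhomog_val (x : H) : to_dhomog (val x) = x.
Proof. by rewrite /to_dhomog /indhomog valKd. Qed.

Lemma to_dhomog_comb s (a : 'I_(size s) -> k) : {in s, forall y, y \is d.-homog} ->
  \sum_i a i *: (map to_dhomog s)`_i = to_dhomog (\sum_i a i *: s`_i).
Proof.
move=> hs; have hs_i (i : 'I_(size s)) : s`_i \is d.-homog by apply: hs; rewrite mem_nth.
apply: val_inj; rewrite val_to_dhomog ?rpred_sum // => [|i _]; last by rewrite rpredZ ?hs_i.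
rewrite linear_sum; apply: eq_bigr => i _ /=.
by rewrite (nth_map 0) // val_to_dhomog.
Qed.

Lemma inspan_dhomog s p : {in s, forall y, y \is d.-homog} -> inspan s p -> p \is d.-homog.
Proof. by move=> hs [a ->]; rewrite rpred_sum // => i _; rewrite rpredZ // hs ?mem_nth. Qed.

Lemma inspan_spanH s p : {in s, forall y, y \is d.-homog} -> p \is d.-homog ->
  inspan s p <-> to_dhomog p \in spanH s.
Proof.
move=> hs hp; rewrite (memv_spanE (size_map _ s)); split => -[a pa]; exists a.
  by rewrite to_dhomog_comb // pa.
rewrite -(val_to_dhomog hp) pa to_dhomog_comb // val_to_dhomog //.
by apply: (inspan_dhomog hs); exists a.
Qed.

Lemma lin_free_spanH s : {in s, forall y, y \is d.-homog} ->
  lin_free s <-> free (map to_dhomog s).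
Proof.
move=> hs; rewrite (freeE_seq (size_map _ s)).
have comb0 (a : 'I_(size s) -> k) :
    (\sum_i a i *: (map to_dhomog s)`_i == 0) = (\sum_i a i *: s`_i == 0).
  rewrite to_dhomog_comb // -(inj_eq val_inj) val_to_dhomog ?raddf0 //.
  by apply: (inspan_dhomog hs); exists a.
by split => free_s a /eqP; [rewrite comb0 | rewrite -comb0] => /eqP; apply: free_s.
Qed.

Lemma same_span_spanH s t : {in s, forall y, y \is d.-homog} ->
  {in t, forall y, y \is d.-homog} -> same_span s t <-> spanH s = spanH t.
Proof.
move=> hs ht; split => [st | st p].
  apply/eqP; rewrite eqEsubv; apply/andP; split; apply/span_subvP => _ /mapP [y y_in ->].
    by apply/(inspan_spanH ht (hs y y_in)); apply/st/inspan_mem.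
  by apply/(inspan_spanH hs (ht y y_in)); apply/st/inspan_mem.
split => sp.
  have hp := inspan_dhomog hs sp.
  by apply/(inspan_spanH ht hp); rewrite -st; apply/(inspan_spanH hs hp).
have hp := inspan_dhomog ht sp.
by apply/(inspan_spanH hs hp); rewrite st; apply/(inspan_spanH ht hp).
Qed.

Lemma span_dim_spanH s m : {in s, forall y, y \is d.-homog} ->
  span_dim s m -> \dim (spanH s) = m.
Proof.
move=> hs [b [free_b <- bs]].
have hb : {in b, forall y, y \is d.-homog} by move=> y /inspan_mem /bs /(inspan_dhomog hs).
rewrite -(same_span_spanH hb hs).1 //; apply/eqP; rewrite -(size_map to_dhomog).
exact/(lin_free_spanH hb).
Qed.

End HomogeneousSpans.

Section FormToSpace.
Variables (k : fieldType) (n d : nat).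
Local Notation P := {mpoly k[n.+1]}.
Local Notation V := 'rV[k]_n.+1.
Local Notation H := (dhomog n.+1 k d).
Implicit Types (f : P) (U W : {vspace V}).

Lemma grad_dhomog f : f \is d.+1.-homog -> {in grad f, forall y, y \is d.-homog}.
Proof. by move=> hf _ /mapP [i _ ->]; apply: mderiv_dhomog hf. Qed.

Lemma lin_free_grad f : f \is d.+1.-homog -> span_dim (grad f) n.+1 -> lin_free (grad f).
Proof.
move=> hf /(span_dim_spanH (grad_dhomog hf)) dim_f.
by apply/(lin_free_spanH (grad_dhomog hf)); rewrite /free size_map size_grad; apply/eqP.
Qed.

Lemma dim_spanH_grad_SymU U f : SymU U d.+1 f -> (\dim (spanH d (grad f)) <= \dim U)%N.
Proof.
move=> fU; have [G [size_G hG fG]] := SymU_mderivv_span fU.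
apply: (@leq_trans (\dim (spanH d G))); last first.
  by rewrite -size_G -(size_map (to_dhomog d)) dim_span.
apply/dimvS/span_subvP => _ /mapP [y /mapP [i _ ->] ->].
by apply/(inspan_spanH hG (mderiv_dhomog i fU.1)); rewrite -mderivv_delta.
Qed.

Lemma SymU_spanH_grad U f (x : H) : SymU U d.+1 f -> x \in spanH d (grad f) ->
  SymU U d (val x).
Proof.
move=> fU x_in; apply: (@inspan_SymU _ _ U _ (grad f)).
  move=> _ /mapP [i _ ->]; split; first exact: mderiv_dhomog fU.1.
  by rewrite -mderivv_delta; apply: in_Sym_mderivv fU.2.
by apply/(inspan_spanH (grad_dhomog fU.1) (dhomog_is_dhomog x)); rewrite to_dhomog_val.
Qed.

Lemma spanH_grad_add f1 f2 : f1 \is d.+1.-homog -> f2 \is d.+1.-homog ->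
  (spanH d (grad (f1 + f2)) <= spanH d (grad f1) + spanH d (grad f2))%VS.
Proof.
move=> h1 h2; apply/span_subvP => _ /mapP [_ /mapP [i _ ->] ->].
have g1 := mderiv_dhomog i h1; have g2 := mderiv_dhomog i h2.
have -> : to_dhomog d (mderiv i (f1 + f2)) =
          to_dhomog d (mderiv i f1) + to_dhomog d (mderiv i f2).
  by apply: val_inj; rewrite raddfD /= !val_to_dhomog ?mderivD ?rpredD.
by apply: memv_add; apply/memv_span/map_f/map_f; rewrite mem_enum.
Qed.

Lemma space_direct_sum_of_spanH U W (S1 S2 : {vspace H}) G :
  [/\ vdecomp U W, U != 0%VS & W != 0%VS] -> {in G, forall y, y \is d.-homog} ->
  spanH d G = (S1 + S2)%VS ->
  (forall x, x \in S1 -> SymU U d (val x)) -> (forall x, x \in S2 -> SymU W d (val x)) ->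
  \dim S1 = \dim U -> \dim S2 = \dim W -> space_direct_sum true d G n.+1.
Proof.
move=> [UW U0 W0] hG GS S1U S2W dim1 dim2.
have hB (S : {vspace H}) : {in map val (vbasis S), forall y, y \is d.-homog}.
  by move=> _ /mapP [x _ ->]; apply: dhomog_is_dhomog.
have mapB (S : {vspace H}) : map (to_dhomog d) (map val (vbasis S)) = vbasis S.
  by rewrite -map_comp map_id_in // => x _; apply: to_dhomog_val.
have freeB (S : {vspace H}) : lin_free (map val (vbasis S)).
  by apply/(lin_free_spanH (hB S)); rewrite mapB; apply: basis_free (vbasisP S).
have spanB (S : {vspace H}) : spanH d (map val (vbasis S)) = S.
  by rewrite /spanH mapB (span_basis (vbasisP S)).
have sizeB (S : {vspace H}) : size (map val (vbasis S)) = \dim S.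
  by rewrite size_map size_tuple.
exists U, W; split => //; exists (map val (vbasis S1)), (map val (vbasis S2)).
split => //.
- by move=> _ /mapP [x x_in ->]; apply/S1U/vbasis_mem.
- by move=> _ /mapP [x x_in ->]; apply/S2W/vbasis_mem.
rewrite !sizeB; split => //; first by rewrite dim1 dim2 (dim_vdecomp UW).
apply/(same_span_spanH hG); first by move=> y; rewrite mem_cat => /orP [] /(hB _).
by rewrite /spanH map_cat span_cat -!/(spanH d _) !spanB.
Qed.

Lemma space_direct_sum_of_form f : f \is d.+1.-homog -> span_dim (grad f) n.+1 ->
  form_direct_sum d.+1 f -> space_direct_sum true d (grad f) n.+1.
Proof.
move=> hf /(span_dim_spanH (grad_dhomog hf)) dim_f.
move=> [U [W [UW [f1 [f2 [f1_0 f2_0 f1U f2W f_eq]]]]]].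
have U0 : U != 0%VS.
  by apply: contraNneq f1_0 => U0; rewrite (SymU_dim0 _ _ f1U) ?U0 ?dimv0.
have W0 : W != 0%VS.
  by apply: contraNneq f2_0 => W0; rewrite (SymU_dim0 _ _ f2W) ?W0 ?dimv0.
set S1 := spanH d (grad f1); set S2 := spanH d (grad f2).
have sub : (spanH d (grad f) <= S1 + S2)%VS by rewrite f_eq spanH_grad_add ?f1U.1 ?f2W.1.
have d1 : (\dim S1 <= \dim U)%N := dim_spanH_grad_SymU f1U.
have d2 : (\dim S2 <= \dim W)%N := dim_spanH_grad_SymU f2W.
have dsum : (n.+1 <= \dim S1 + \dim S2)%N.
  by rewrite -dim_f -(dimv_sum_cap S1 S2) (leq_trans (dimvS sub)) ?leq_addr.
have dUW := dim_vdecomp UW.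
have dim1 : \dim S1 = \dim U by lia.
have dim2 : \dim S2 = \dim W by lia.
apply: (space_direct_sum_of_spanH (And3 UW U0 W0) (grad_dhomog hf) _
          (fun x => SymU_spanH_grad f1U) (fun x => SymU_spanH_grad f2W) dim1 dim2).
apply/eqP; rewrite eqEdim sub /= dim_f -[X in (_ <= X)%N]dUW -dim1 -dim2.
by rewrite -(dimv_sum_cap S1 S2) leq_addr.
Qed.

End FormToSpace.

Lemma space_direct_sum_unbalanced (k : fieldType) (n d m : nat) (G : seq {mpoly k[n]}) :
  space_direct_sum true d G m -> space_direct_sum false d G m.
Proof.
move=> [U [W [UW [b1 [b2 [free1 free2 b1U b2W [size_b span_b _]]]]]]].
by exists U, W; split => //; exists b1, b2.
Qed.

Lemma vspace_rV0_eq0 (k : fieldType) (U : {vspace 'rV[k]_0}) : U = 0%VS.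
Proof. by apply/eqP; rewrite -dimv_eq0 -leqn0 -[X in (_ <= X)%N](dimvf 'rV[k]_0) dimvS ?subvf. Qed.

Lemma form_direct_sum_nvar0 (k : fieldType) (e : nat) (f : {mpoly k[0]}) :
  ~ form_direct_sum e.+1 f.
Proof.
move=> [U [_ [_ [f1 [_ [f1_0 _ f1U _ _]]]]]].
by move: f1_0; rewrite (SymU_dim0 _ _ f1U) ?eqxx // (vspace_rV0_eq0 U) dimv0.
Qed.

Lemma space_direct_sum_nvar0 (k : fieldType) bal (d : nat) (G : seq {mpoly k[0]}) :
  ~ space_direct_sum bal d G 0.
Proof. by move=> [U [W [[_ U0 _] _]]]; rewrite (vspace_rV0_eq0 U) eqxx in U0. Qed.

Unset Implicit Arguments.

Theorem lemma2p2 (k : fieldType) (n d : nat) (f : {mpoly k[n]})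
  (hchar : forall p : nat, p \in [pchar k] -> ~~ (p %| (d.+1)`!)%N)
  (hf : f \is (d.+1).-homog)
  (hdim : span_dim (grad f) n) :
  (form_direct_sum d.+1 f <-> space_direct_sum false d (grad f) n) /\
  (space_direct_sum false d (grad f) n <-> space_direct_sum true d (grad f) n).
Proof.
case: n f hf hdim => [|n] f hf hdim.
  have noF := @form_direct_sum_nvar0 k d f.
  have noS bal := @space_direct_sum_nvar0 k bal d (grad f).
  by split; [split => [/noF | /noS] | split => /noS].
have ndf := lin_free_grad_nondegenerate (lin_free_grad hf hdim).
have FtoS := space_direct_sum_of_form hf hdim.
have StoF bal := @form_direct_sum_of_space k n.+1 d bal f hchar hf ndf.
have weaken := @space_direct_sum_unbalanced k n.+1 d n.+1 (grad f).
by split; [split => [/FtoS/weaken | /StoF] | split => [/StoF/FtoS | /weaken]].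
Qed.
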